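(* For all integers $n$ and $\alpha$ with $n<\alpha\le 2^{n-2}+2$, there exists a minimal $n$-state nondeterministic finite automaton accepting an infix-free language whose equivalent minimal deterministic finite automaton has exactly $\alpha$ states.
   Context: NFAs have a single initial state and a transition function $\delta:Q\times\Sigma\to 2^Q$ that may map to the empty set (no sink state is needed or counted); DFAs are complete, so a sink state is counted. A minimal $n$-state NFA is an NFA with $n$ states such that no NFA with fewer states accepts the same language. A language $L\subseteq\Sigma^*$ is infix-free if $y\in L$ implies $xyz\notin L$ for all $x,z\in\Sigma^*$ with $xz\neq\lambda$ ($\lambda$ the empty word). *)

From mathcomp Require Import all_boot.
Set Implicit Arguments. Unset Strict Implicit. Unset Printing Implicit Defensive.

(* Words over a finite alphabet Sigma are sequences [seq Sigma]; the empty
   word lambda is [::]. *)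

(* NFA: single initial state, transition function Q x Sigma -> 2^Q
   (possibly empty; no sink state needed). *)
Record nfa (Sigma Q : finType) := Nfa {
  nfa_start : Q;
  nfa_delta : Q -> Sigma -> {set Q};
  nfa_final : {set Q} }.

Definition nfa_step (Sigma Q : finType) (A : nfa Sigma Q) (S : {set Q}) (a : Sigma)
  : {set Q} := \bigcup_(q in S) nfa_delta A q a.

Definition nfa_accepts (Sigma Q : finType) (A : nfa Sigma Q) (w : seq Sigma) : bool :=
  [exists q in foldl (nfa_step A) [set nfa_start A] w, q \in nfa_final A].

(* Complete DFA: total transition function (sink states are counted). *)
Record dfa (Sigma Q : finType) := Dfa {
  dfa_start : Q;
  dfa_delta : Q -> Sigma -> Q;
  dfa_final : {set Q} }.

Definition dfa_accepts (Sigma Q : finType) (D : dfa Sigma Q) (w : seq Sigma) : bool :=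
  foldl (dfa_delta D) (dfa_start D) w \in dfa_final D.

Definition nfa_lang (Sigma Q : finType) (A : nfa Sigma Q) : seq Sigma -> bool :=
  nfa_accepts A.
Definition dfa_lang (Sigma Q : finType) (D : dfa Sigma Q) : seq Sigma -> bool :=
  dfa_accepts D.

Definition minimal_nfa (Sigma Q : finType) (A : nfa Sigma Q) : Prop :=
  forall (Q' : finType) (B : nfa Sigma Q'),
    (forall w, nfa_accepts B w = nfa_accepts A w) -> #|Q| <= #|Q'|.

Definition min_dfa_size (Sigma : finType) (L : seq Sigma -> bool) (alpha : nat) : Prop :=
  (exists (Q : finType) (D : dfa Sigma Q), #|Q| = alpha /\ forall w, dfa_accepts D w = L w)
  /\ (forall (Q : finType) (D : dfa Sigma Q), (forall w, dfa_accepts D w = L w) -> alpha <= #|Q|).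

Definition infix_free (Sigma : finType) (L : seq Sigma -> bool) : Prop :=
  forall x y z : seq Sigma, L y -> x ++ z != [::] -> ~~ L (x ++ y ++ z).

From mathcomp Require Import all_boot zify.
Set Implicit Arguments. Unset Strict Implicit. Unset Printing Implicit Defensive.

(* For n >= 3 put k = n - 2 and fix a family F of nonempty subsets of a
   k-element set J containing every singleton.  The NFA with states
   J + {s, f} reads a letter T in F from s into the states of T, then a letter
   j from state j into f: it accepts the words T j with j in T, all of length
   two, so its language is infix-free.  Every state q has a word x_q leading
   from s to exactly {q} and a word y_q accepted from q alone.  The pairs
   (x_q, y_q) form a fooling set, so the NFA is minimal; and the y_q separate
   distinct reachable subsets, so the minimal DFA is the reachable part of
   the subset automaton, with states {s}, {f}, the empty set and the sets T
   in F.  As |F| ranges over k .. 2^k - 1, alpha = |F| + 3 takes every value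
   in n + 1 .. 2^(n-2) + 2.  For n <= 2 the bounds force alpha = n + 1, which
   the n-state chain accepting a^(n-1) realizes. *)

Section NfaReach.
Variables (Sigma Q : finType) (A : nfa Sigma Q).
Implicit Types (X Y : {set Q}) (w : seq Sigma).

Definition nfa_reach X w : {set Q} := foldl (nfa_step A) X w.

Definition nfa_accepts_from X w : bool :=
  [exists q in nfa_reach X w, q \in nfa_final A].

Lemma nfa_reach_cons X a w : nfa_reach X (a :: w) = nfa_reach (nfa_step A X a) w.
Proof. by []. Qed.

Lemma nfa_acceptsE w : nfa_accepts A w = nfa_accepts_from [set nfa_start A] w.
Proof. by []. Qed.

Lemma nfa_accepts_from_cons X a w :
  nfa_accepts_from X (a :: w) = nfa_accepts_from (nfa_step A X a) w.
Proof. by []. Qed.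

Lemma nfa_accepts_from_cat X u v :
  nfa_accepts_from X (u ++ v) = nfa_accepts_from (nfa_reach X u) v.
Proof. by rewrite /nfa_accepts_from /nfa_reach foldl_cat. Qed.

Lemma nfa_step_set0 a : nfa_step A set0 a = set0.
Proof. exact: big_set0. Qed.

Lemma nfa_reach_set0 w : nfa_reach set0 w = set0.
Proof. by elim: w => [//|a w IH]; rewrite nfa_reach_cons nfa_step_set0. Qed.

Lemma nfa_step_subset X Y a : X \subset Y -> nfa_step A X a \subset nfa_step A Y a.
Proof.
move=> /subsetP XY; apply/subsetP => q /bigcupP [p pX qp].
by apply/bigcupP; exists p => //; apply: XY.
Qed.

Lemma nfa_reach_subset X Y w : X \subset Y -> nfa_reach X w \subset nfa_reach Y w.
Proof.
by elim: w X Y => [//|a w IH] X Y XY; rewrite !nfa_reach_cons; apply/IH/nfa_step_subset.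
Qed.

Lemma nfa_reach_split X w q :
  q \in nfa_reach X w -> exists2 p, p \in X & q \in nfa_reach [set p] w.
Proof.
elim: w X => [|a w IH] X; first by exists q; rewrite ?set11.
rewrite nfa_reach_cons => /IH [r /bigcupP [p pX rp] qr]; exists p => //.
apply: (subsetP (nfa_reach_subset w _)) qr.
by rewrite sub1set; apply/bigcupP; exists p; rewrite ?set11.
Qed.

Lemma nfa_accepts_fromE X w :
  nfa_accepts_from X w = [exists p in X, nfa_accepts_from [set p] w].
Proof.
apply/existsP/existsP => [[q /andP [/nfa_reach_split [p pX qp] qF]]|[p /andP [pX]]].
  by exists p; rewrite pX; apply/existsP; exists q; rewrite qp.
case/existsP => q /andP [qp qF]; exists q; rewrite qF andbT.
by apply: (subsetP (nfa_reach_subset w _)) qp; rewrite sub1set.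
Qed.

End NfaReach.

Lemma fooling_set_card (Sigma I Q : finType) (A : nfa Sigma Q) (x y : I -> seq Sigma) :
  (forall i j, nfa_accepts A (x i ++ y j) = (i == j)) -> #|I| <= #|Q|.
Proof.
move=> xy_acc.
(* Pick a state through which [x i ++ y i] passes; if [i] and [j] shared it,
   [x i ++ y j] would be accepted too. *)
have mid i : exists q, (q \in nfa_reach A [set nfa_start A] (x i))
                         && nfa_accepts_from A [set q] (y i).
  have := xy_acc i i.
  rewrite eqxx nfa_acceptsE nfa_accepts_from_cat nfa_accepts_fromE.
  by case/existsP => q; exists q.
apply: (@leq_card _ _ (fun i => xchoose (mid i))) => i j eq_ij.
have /andP [reach_i _] := xchooseP (mid i).
have /andP [_ acc_j] := xchooseP (mid j).
apply/eqP; rewrite -xy_acc nfa_acceptsE nfa_accepts_from_cat nfa_accepts_fromE.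
by apply/existsP; exists (xchoose (mid i)); rewrite reach_i eq_ij.
Qed.

Lemma nerode_card (Sigma I Q : finType) (D : dfa Sigma Q) (w : I -> seq Sigma) :
  (forall i j, (forall z, dfa_accepts D (w i ++ z) = dfa_accepts D (w j ++ z)) -> i = j) ->
  #|I| <= #|Q|.
Proof.
move=> w_inj.
apply: (@leq_card _ _ (fun i => foldl (dfa_delta D) (dfa_start D) (w i))) => i j eq_ij.
by apply: w_inj => z; rewrite /dfa_accepts !foldl_cat eq_ij.
Qed.

Lemma fixed_length_infix_free (Sigma : finType) (L : seq Sigma -> bool) k :
  (forall w, L w -> size w = k) -> infix_free L.
Proof.
move=> sizeL x y z /sizeL size_y xz; apply/negP => /sizeL.
rewrite !size_cat size_y => size_xyz.
have /eqP : size (x ++ z) = 0 by rewrite size_cat; lia.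
by rewrite size_eq0 (negbTE xz).
Qed.

Section SubsetDfa.
Variables (Sigma Q : finType) (A : nfa Sigma Q) (R : {set {set Q}}).
Hypothesis R_start : [set nfa_start A] \in R.
Hypothesis R_step : forall X a, X \in R -> nfa_step A X a \in R.

Local Notation subset_state := {X : {set Q} | X \in R}.

Definition subset_delta (X : subset_state) (a : Sigma) : subset_state :=
  exist _ (nfa_step A (val X) a) (R_step a (valP X)).

Definition subset_dfa : dfa Sigma subset_state :=
  Dfa (exist _ [set nfa_start A] R_start) subset_delta
    [set X : subset_state | nfa_accepts_from A (val X) [::]].

Lemma card_subset_state : #|{: subset_state}| = #|R|.
Proof. by rewrite card_sig; apply: eq_card. Qed.

Lemma subset_dfa_reach X w :
  val (foldl (dfa_delta subset_dfa) X w) = nfa_reach A (val X) w.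
Proof. by elim: w X => [|a w IH] X //=; rewrite IH. Qed.

Lemma subset_dfa_accepts w : dfa_accepts subset_dfa w = nfa_accepts A w.
Proof.
by rewrite /dfa_accepts inE subset_dfa_reach nfa_acceptsE /nfa_accepts_from.
Qed.

End SubsetDfa.

Section StateWitnesses.
Variables (Sigma Q : finType) (A : nfa Sigma Q) (y : Q -> seq Sigma).
Hypothesis accepts_y : forall p q, nfa_accepts_from A [set p] (y q) = (p == q).

Lemma nfa_accepts_from_witness X q : nfa_accepts_from A X (y q) = (q \in X).
Proof.
rewrite nfa_accepts_fromE; apply/existsP/idP => [[p /andP [pX]]|qX].
  by rewrite accepts_y => /eqP <-.
by exists q; rewrite qX accepts_y eqxx.
Qed.

Lemma witnesses_minimal_nfa (x : Q -> seq Sigma) :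
  (forall q, nfa_reach A [set nfa_start A] (x q) = [set q]) -> minimal_nfa A.
Proof.
move=> reach_x Q' B eqB; apply: (@fooling_set_card _ _ _ B x y) => p q.
by rewrite eqB nfa_acceptsE nfa_accepts_from_cat reach_x accepts_y.
Qed.

Lemma witnesses_min_dfa_size (R : {set {set Q}})
    (R_start : [set nfa_start A] \in R)
    (R_step : forall X a, X \in R -> nfa_step A X a \in R) :
  (forall X, X \in R -> exists w, nfa_reach A [set nfa_start A] w = X) ->
  min_dfa_size (nfa_lang A) #|R|.
Proof.
move=> R_reachable; split.
  exists _, (subset_dfa R_start R_step).
  by split; [exact: card_subset_state | exact: subset_dfa_accepts].
move=> Q' D eqD.
(* Distinct reachable subsets differ at some [q], and [y q] tells them apart. *)
have word (X : {Y : {set Q} | Y \in R}) : exists w, nfa_reach A [set nfa_start A] w == val X.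
  by have [w <-] := R_reachable _ (valP X); exists w.
rewrite -card_subset_state; apply: (@nerode_card _ _ _ D (fun X => xchoose (word X))).
move=> X Y eqXY; apply/val_inj/setP => q.
rewrite -!nfa_accepts_from_witness -(eqP (xchooseP (word X))) -(eqP (xchooseP (word Y))).
by rewrite -!nfa_accepts_from_cat -!nfa_acceptsE -![nfa_accepts _ _]/(nfa_lang _ _) -!eqD.
Qed.

End StateWitnesses.

Section Chain.
Variable m : nat.

(* The state with value c; empty when c > m. *)
Definition chain_state (c : nat) : {set 'I_m.+1} := [set j : 'I_m.+1 | j == c :> nat].

Definition chain_nfa : nfa unit 'I_m.+1 :=
  Nfa ord0 (fun i _ => chain_state i.+1) [set ord_max].

Definition chain_sets : {set {set 'I_m.+1}} := [set chain_state c | c : 'I_m.+2].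

Lemma chain_state_ord (i : 'I_m.+1) : chain_state i = [set i].
Proof. by apply/setP => j; rewrite !inE. Qed.

Lemma chain_start : [set nfa_start chain_nfa] = chain_state 0.
Proof. by rewrite -(chain_state_ord ord0). Qed.

Lemma chain_step c a : nfa_step chain_nfa (chain_state c) a = chain_state c.+1.
Proof.
apply/setP => j; rewrite inE; apply/bigcupP/eqP => [[i]|jc].
  by rewrite !inE => /eqP <- /eqP.
have ltcm : c < m.+1 by have := ltn_ord j; rewrite jc; lia.
by exists (Ordinal ltcm); rewrite !inE ?jc.
Qed.

Lemma chain_reach c w : nfa_reach chain_nfa (chain_state c) w = chain_state (c + size w).
Proof.
by elim: w c => [|a w IH] c; rewrite ?addn0 // nfa_reach_cons chain_step IH addSnnS.
Qed.

Lemma chain_accepts_from c w :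
  nfa_accepts_from chain_nfa (chain_state c) w = (c + size w == m).
Proof.
rewrite /nfa_accepts_from chain_reach; apply/existsP/eqP => [[q]|cw].
  by rewrite !inE => /andP [/eqP <- /eqP ->].
by exists ord_max; rewrite !inE cw !eqxx.
Qed.

Lemma chain_accepts w : nfa_accepts chain_nfa w = (size w == m).
Proof. by rewrite nfa_acceptsE chain_start chain_accepts_from. Qed.

Lemma chain_state_in c : chain_state c \in chain_sets.
Proof.
have [c_le | c_gt] := leqP c m.+1.
  by apply/imsetP; exists (Ordinal (c_le : c < m.+2)).
have -> : chain_state c = chain_state m.+1.
  by apply/setP => j; rewrite !inE; apply/eqP/eqP => e; have := ltn_ord j; lia.
by apply/imsetP; exists ord_max.
Qed.

Lemma card_chain_sets : #|chain_sets| = m.+2.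
Proof.
have small_inj (c d : 'I_m.+2) : c <= m -> chain_state c = chain_state d -> c = d.
  move=> c_le /setP /(_ (Ordinal (c_le : c < m.+1))).
  by rewrite !inE eqxx => /esym /eqP cd; apply: ord_inj.
rewrite card_imset ?card_ord // => c d cd.
have [c_le | c_gt] := leqP c m; first exact: small_inj.
have [d_le | d_gt] := leqP d m; first exact/esym/small_inj.
by apply: ord_inj; have := ltn_ord c; have := ltn_ord d; lia.
Qed.

Lemma chain_nfa_spec :
  [/\ minimal_nfa chain_nfa, infix_free (nfa_lang chain_nfa)
    & min_dfa_size (nfa_lang chain_nfa) m.+2].
Proof.
have accepts_y (p q : 'I_m.+1) :
    nfa_accepts_from chain_nfa [set p] (nseq (m - q) tt) = (p == q).
  rewrite -chain_state_ord chain_accepts_from size_nseq.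
  apply/eqP/eqP => [pq|->]; last by have := ltn_ord q; lia.
  by apply: ord_inj; have := ltn_ord p; have := ltn_ord q; lia.
split.
- apply: (witnesses_minimal_nfa accepts_y (x := fun q => nseq q tt)) => q.
  by rewrite chain_start chain_reach size_nseq chain_state_ord.
- apply: (@fixed_length_infix_free _ _ m) => w.
  by rewrite /nfa_lang chain_accepts => /eqP.
rewrite -card_chain_sets.
apply: (witnesses_min_dfa_size accepts_y) => [|X a /imsetP [c _ ->]|X /imsetP [c _ ->]].
- by rewrite chain_start chain_state_in.
- by rewrite chain_step chain_state_in.
by exists (nseq c tt); rewrite chain_start chain_reach size_nseq.
Qed.

End Chain.

Lemma exists_subset_card (T : finType) (A : {set T}) c :
  c <= #|A| -> exists2 B : {set T}, B \subset A & #|B| = c.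
Proof.
move=> cA; exists [set x in take c (enum A)].
  by apply/subsetP => x; rewrite inE => /mem_take; rewrite mem_enum.
by rewrite cardsE (card_uniqP (take_uniq _ (enum_uniq _))) size_takel // -cardE.
Qed.

Lemma exists_singleton_family k c : k <= c < 2 ^ k ->
  exists F : {set {set 'I_k}}, [/\ forall i, [set i] \in F, set0 \notin F & #|F| = c].
Proof.
case/andP => kc c_lt.
pose singles := [set [set i] | i : 'I_k].
have card_singles : #|singles| = k by rewrite card_imset ?card_ord //; exact: set1_inj.
have set0_singles : set0 \notin singles.
  by apply/imsetP => -[i _ /setP /(_ i)]; rewrite !inE eqxx.
have card_sets : #|{set 'I_k}| = 2 ^ k.
  by rewrite -cardsT -powersetT card_powerset cardsT card_ord.
have card_large : #|~: (set0 |: singles)| = 2 ^ k - k.+1.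
  have := cardsC (set0 |: singles).
  by rewrite cardsU1 set0_singles card_singles card_sets /= => <-; rewrite addKn.
have [G G_large card_G] :
    exists2 G : {set {set 'I_k}}, G \subset ~: (set0 |: singles) & #|G| = c - k.
  by apply: exists_subset_card; rewrite card_large; lia.
have G_out X : X \in G -> X \notin set0 |: singles.
  by move=> XG; rewrite -in_setC (subsetP G_large).
exists (singles :|: G); split.
- by move=> i; rewrite in_setU imset_f.
- rewrite in_setU negb_or set0_singles /=.
  by apply/negP => /G_out; rewrite setU11.
rewrite cardsU card_singles card_G.
have -> : singles :&: G = set0.
  apply/setP => X; rewrite !inE; apply/negP => /andP [X_single /G_out].
  by rewrite in_setU1 X_single orbT.
by rewrite cards0; lia.
Qed.

Section Member.
Variables (k : nat) (F : {set {set 'I_k.+1}}).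
Hypothesis F_singletons : forall i, [set i] \in F.
Hypothesis F_nonempty : set0 \notin F.

Local Notation state := ('I_k.+1 + bool)%type.
Local Notation letter := ({set 'I_k.+1} + 'I_k.+1)%type.
Local Notation s0 := (@inr 'I_k.+1 bool false).
Local Notation sf := (@inr 'I_k.+1 bool true).

Definition inl_set (T : {set 'I_k.+1}) : {set state} := [set inl i | i in T].

Definition member_delta (q : state) (a : letter) : {set state} :=
  match q, a with
  | inr false, inl T => if T \in F then inl_set T else set0
  | inl i, inr j => if i == j then [set sf] else set0
  | _, _ => set0
  end.

Definition member_nfa : nfa letter state := Nfa s0 member_delta [set sf].

Definition member_sets : {set {set state}} :=
  [set [set s0]; [set sf]; set0] :|: [set inl_set T | T in F].

Definition member_x (q : state) : seq letter :=
  match q with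
  | inl i => [:: inl [set i]]
  | inr false => [::]
  | inr true => [:: inl [set ord0]; inr ord0]
  end.

Definition member_y (q : state) : seq letter :=
  match q with
  | inl i => [:: inr i]
  | inr false => [:: inl [set ord0]; inr ord0]
  | inr true => [::]
  end.

Lemma inl_set1 i : inl_set [set i] = [set inl i].
Proof. exact: imset_set1. Qed.

Lemma inr_notin_inl_set b T : inr b \notin inl_set T.
Proof. by apply/imsetP => -[]. Qed.

Lemma member_step_set X T :
  nfa_step member_nfa X (inl T) = if (s0 \in X) && (T \in F) then inl_set T else set0.
Proof.
apply/setP => q; apply/bigcupP/idP => [[[i|[]] pX] //=|]; rewrite ?inE ?pX //.
by case: ifP => [/andP [sX TF] qT|]; [exists s0; rewrite //= TF | rewrite inE].
Qed.

Lemma member_step_elem X j :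
  nfa_step member_nfa X (inr j) = if inl j \in X then [set sf] else set0.
Proof.
apply/setP => q; apply/bigcupP/idP => [[[i|[]] iX] //=|]; rewrite ?inE //.
  by case: eqP iX => [-> -> //|]; rewrite inE.
by case: ifP => [jX qf|]; [exists (inl j); rewrite //= eqxx | rewrite inE].
Qed.

Lemma member_accepts_from_nil X : nfa_accepts_from member_nfa X [::] = (sf \in X).
Proof.
apply/existsP/idP => [[q /andP [qX]]|fX]; first by rewrite inE => /eqP <-.
by exists sf; rewrite fX inE eqxx.
Qed.

Lemma member_reach_x q :
  nfa_reach member_nfa [set nfa_start member_nfa] (member_x q) = [set q].
Proof.
case: q => [i|[]] /=;
  rewrite ?nfa_reach_cons ?member_step_set ?set11 ?F_singletons ?inl_set1 //.
by rewrite member_step_elem set11.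
Qed.

Lemma member_accepts_y p q : nfa_accepts_from member_nfa [set p] (member_y q) = (p == q).
Proof.
case: q => [i|[]] /=; rewrite ?nfa_accepts_from_cons ?member_step_elem ?member_step_set.
- by rewrite inE eq_sym; case: ifP; rewrite member_accepts_from_nil inE ?eqxx.
- by rewrite member_accepts_from_nil inE eq_sym.
rewrite inE F_singletons andbT inl_set1 eq_sym.
by case: eqP => _; rewrite !inE ?eqxx member_accepts_from_nil inE.
Qed.

Lemma member_step_in X a : nfa_step member_nfa X a \in member_sets.
Proof.
case: a => [T|j]; rewrite ?member_step_set ?member_step_elem.
  by case: ifP => [/andP [_ TF]|_]; rewrite in_setU ?imset_f ?orbT // !inE eqxx !orbT.
by case: ifP => _; rewrite !inE eqxx !orbT.
Qed.

Lemma member_sets_reachable X :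
  X \in member_sets -> exists w, nfa_reach member_nfa [set nfa_start member_nfa] w = X.
Proof.
case/setUP => [|/imsetP [T TF ->]]; last first.
  by exists [:: inl T]; rewrite nfa_reach_cons member_step_set set11 TF.
rewrite !inE => /orP [/orP []|] /eqP ->.
- by exists (member_x s0).
- by exists (member_x sf); rewrite member_reach_x.
by exists [:: inr ord0]; rewrite nfa_reach_cons member_step_elem inE.
Qed.

Lemma card_member_sets : #|member_sets| = 3 + #|F|.
Proof.
have neq_set1 (p q : state) : p != q -> ([set p] == [set q]) = false.
  by move=> pq; apply/negbTE; apply: contra pq => /eqP /setP /(_ p); rewrite !inE eqxx.
have neq_set0 (p : state) : (set0 == [set p]) = false.
  by apply/negbTE/eqP => /setP /(_ p); rewrite !inE eqxx.
rewrite cardsU.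
have -> : [set [set s0]; [set sf]; set0] :&: [set inl_set T | T in F] = set0.
  apply/setP => X; rewrite !inE; apply/negP => /andP [X_small /imsetP [T TF XT]].
  move: X_small; rewrite XT => /orP [/orP []|] /eqP.
  - by move/setP/(_ s0); rewrite inE eqxx (negbTE (inr_notin_inl_set _ _)).
  - by move/setP/(_ sf); rewrite inE eqxx (negbTE (inr_notin_inl_set _ _)).
  - by move/eqP; rewrite /inl_set imset_eq0 => /eqP T0; move: F_nonempty; rewrite -T0 TF.
rewrite cards0 subn0 card_imset; last by apply: imset_inj => ? ? [].
by rewrite setUC cardsU1 cards2 !inE neq_set1 // !neq_set0.
Qed.

Lemma member_accepts_size w : nfa_accepts member_nfa w -> size w = 2.
Proof.
have start_lost (X : {set state}) (a : letter) : s0 \notin nfa_step member_nfa X a.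
  case: a => [T|j]; rewrite ?member_step_set ?member_step_elem.
    by case: ifP => _; rewrite ?inE ?inr_notin_inl_set.
  by case: ifP => _; rewrite !inE.
have final_only (X : {set state}) (a : letter) :
    s0 \notin X -> nfa_step member_nfa X a \subset [set sf].
  move/negbTE => sX; case: a => [T|j]; first by rewrite member_step_set sX sub0set.
  by rewrite member_step_elem; case: ifP; rewrite ?sub0set.
have final_dead (X : {set state}) (a : letter) :
    X \subset [set sf] -> nfa_step member_nfa X a = set0.
  move/subsetP => Xf; case: a => [T|j]; rewrite ?member_step_set ?member_step_elem.
    by case: ifP => // /andP [/Xf]; rewrite inE.
  by case: ifP => // /Xf; rewrite inE.
rewrite nfa_acceptsE; case: w => [|a [|b [|c w]]] //.
- by rewrite member_accepts_from_nil inE.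
- rewrite nfa_accepts_from_cons member_accepts_from_nil.
  case: a => [T|j]; rewrite ?member_step_set ?member_step_elem.
    by case: ifP => _; rewrite ?inE ?(negbTE (inr_notin_inl_set _ _)).
  by rewrite !inE.
rewrite !nfa_accepts_from_cons final_dead ?final_only ?start_lost //.
by rewrite /nfa_accepts_from nfa_reach_set0; case/existsP => q; rewrite inE.
Qed.

Lemma member_nfa_spec :
  [/\ minimal_nfa member_nfa, infix_free (nfa_lang member_nfa)
    & min_dfa_size (nfa_lang member_nfa) (3 + #|F|)].
Proof.
split.
- exact: (witnesses_minimal_nfa member_accepts_y member_reach_x).
- exact: fixed_length_infix_free member_accepts_size.
rewrite -card_member_sets; apply: (witnesses_min_dfa_size member_accepts_y).
- by rewrite !inE eqxx.
- by move=> X a _; apply: member_step_in.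
exact: member_sets_reachable.
Qed.

End Member.

Theorem mainTheorem6 (n alpha : nat) :
  1 <= n -> n < alpha -> 4 * alpha <= 2 ^ n + 8 ->
  exists (Sigma Q : finType) (A : nfa Sigma Q),
    #|Q| = n /\ minimal_nfa A /\ infix_free (nfa_lang A) /\
    min_dfa_size (nfa_lang A) alpha.
Proof.
move=> n_ge1 n_lt alpha_le.
have [n_le2 | n_gt2] := leqP n 2.
  have [m n_eq] : exists m, n = m.+1 by exists n.-1; lia.
  have -> : alpha = m.+2.
    by move: n_le2 n_lt alpha_le; rewrite n_eq; case: m {n_eq} => [|[|]] //=; lia.
  have [min_A infix_A dfa_A] := chain_nfa_spec m.
  by exists unit, 'I_m.+1, (chain_nfa m); rewrite card_ord n_eq.
have [k n_eq] : exists k, n = k.+3 by exists (n - 3); lia.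
have [F [F_singletons F_nonempty card_F]] : exists F : {set {set 'I_k.+1}},
    [/\ forall i, [set i] \in F, set0 \notin F & #|F| = alpha - 3].
  by apply: exists_singleton_family; move: alpha_le; rewrite n_eq !expnS; lia.
have [min_A infix_A dfa_A] := member_nfa_spec F_singletons F_nonempty.
exists _, _, (member_nfa F); rewrite card_sum card_ord card_bool n_eq addn2.
by have -> : alpha = 3 + #|F| by lia.
Qed.
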